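(* Let $(A,\circ,[\cdot,\cdot])$ be a dual pre-Poisson algebra and $(B,\diamond,\odot)$ a pre-Poisson algebra. Define bilinear operations on $A\otimes B$ by $$(x\otimes a)\diamond_1(y\otimes b)=(x\circ y)\otimes(a\diamond b),\qquad (x\otimes a)\diamond_2(y\otimes b)=[x,y]\otimes(a\odot b),$$ for $x,y\in A$, $a,b\in B$. Then $(A\otimes B,\diamond_1)$ and $(A\otimes B,\diamond_2)$ are pre-Lie algebras, $(A\otimes B,\diamond_1,\diamond_2)$ is a compatible pre-Lie algebra, and $(A\otimes B,\{\cdot,\cdot\}_1,\{\cdot,\cdot\}_2)$ with $\{X,Y\}_k=X\diamond_k Y-Y\diamond_k X$ ($k=1,2$) is a compatible Lie algebra.
   Context: Field $\mathbb{F}$ of characteristic $0$. A dual pre-Poisson algebra: $x\circ(y\circ z)=(x\circ y)\circ z=(y\circ x)\circ z$; $[x,[y,z]]=[[x,y],z]+[y,[x,z]]$; $[x,y\circ z]=[x,y]\circ z+y\circ[x,z]$; $[x\circ y,z]=x\circ[y,z]+y\circ[x,z]$; $[x,y]\circ z=-[y,x]\circ z$. A pre-Lie algebra $(A,\diamond)$: $x\diamond(y\diamond z)-(x\diamond y)\diamond z=y\diamond(x\diamond z)-(y\diamond x)\diamond z$. A pre-Poisson algebra $(B,\diamond,\odot)$: $(B,\diamond)$ pre-Lie; $(B,\odot)$ Zinbiel, i.e. $x\odot(y\odot z)=(x\odot y+y\odot x)\odot z$; and $(x\diamond y-y\diamond x)\odot z=x\diamond(y\odot z)-y\odot(x\diamond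 z)$, $(x\odot y+y\odot x)\diamond z=x\odot(y\diamond z)+y\odot(x\diamond z)$. A compatible pre-Lie algebra $(A,\diamond,\diamond')$ consists of two pre-Lie products such that $k_1\,x\diamond y+k_2\,x\diamond' y$ is a pre-Lie product for all $k_1,k_2\in\mathbb{F}$. A compatible Lie algebra $(A,\{\cdot,\cdot\},\{\cdot,\cdot\}')$ consists of two Lie brackets such that $k_1\{\cdot,\cdot\}+k_2\{\cdot,\cdot\}'$ is a Lie bracket for all $k_1,k_2\in\mathbb{F}$. *)

From HB Require Import structures.
From mathcomp Require Import all_boot all_order all_algebra.
Set Implicit Arguments. Unset Strict Implicit. Unset Printing Implicit Defensive.
Import GRing.Theory.
Local Open Scope ring_scope.

Section Defs.
Variable F : fieldType.

Definition bilinear_map (U V W : lmodType F) (f : U -> V -> W) : Prop :=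
  (forall (k : F) (x x' : U) (y : V), f (k *: x + x') y = k *: f x y + f x' y) /\
  (forall (k : F) (x : U) (y y' : V), f x (k *: y + y') = k *: f x y + f x y').

Definition linear_map (U W : lmodType F) (g : U -> W) : Prop :=
  forall (k : F) (u v : U), g (k *: u + v) = k *: g u + g v.

Definition is_tensor_product (A B T : lmodType F) (tens : A -> B -> T) : Prop :=
  [/\ bilinear_map tens,
      (forall t : T, exists s : seq (A * B), t = \sum_(p <- s) tens p.1 p.2) &
      (forall (W : lmodType F) (f : A -> B -> W), bilinear_map f ->
         exists! g : T -> W, linear_map g /\ forall x a, g (tens x a) = f x a)].

Definition dual_pre_poisson (A : lmodType F) (circ br : A -> A -> A) : Prop :=
  bilinear_map circ /\ bilinear_map br /\
  (forall x y z, circ x (circ y z) = circ (circ x y) z) /\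
  (forall x y z, circ (circ x y) z = circ (circ y x) z) /\
  (forall x y z, br x (br y z) = br (br x y) z + br y (br x z)) /\
  (forall x y z, br x (circ y z) = circ (br x y) z + circ y (br x z)) /\
  (forall x y z, br (circ x y) z = circ x (br y z) + circ y (br x z)) /\
  (forall x y z, circ (br x y) z = - circ (br y x) z).

Definition is_prelie (A : lmodType F) (d : A -> A -> A) : Prop :=
  bilinear_map d /\
  forall x y z, d x (d y z) - d (d x y) z = d y (d x z) - d (d y x) z.

Definition is_zinbiel (A : lmodType F) (o : A -> A -> A) : Prop :=
  bilinear_map o /\ forall x y z, o x (o y z) = o (o x y + o y x) z.

Definition pre_poisson (B : lmodType F) (dia odot : B -> B -> B) : Prop :=
  [/\ is_prelie dia, is_zinbiel odot,
      (forall x y z, odot (dia x y - dia y x) z = dia x (odot y z) - odot y (dia x z)) &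
      (forall x y z, dia (odot x y + odot y x) z = odot x (dia y z) + odot y (dia x z))].

Definition compatible_prelie (A : lmodType F) (d1 d2 : A -> A -> A) : Prop :=
  [/\ is_prelie d1, is_prelie d2 &
      forall k1 k2 : F, is_prelie (fun x y => k1 *: d1 x y + k2 *: d2 x y)].

Definition is_lie (A : lmodType F) (b : A -> A -> A) : Prop :=
  [/\ bilinear_map b, (forall x, b x x = 0) &
      (forall x y z, b x (b y z) + b y (b z x) + b z (b x y) = 0)].

Definition compatible_lie (A : lmodType F) (b1 b2 : A -> A -> A) : Prop :=
  [/\ is_lie b1, is_lie b2 &
      forall k1 k2 : F, is_lie (fun x y => k1 *: b1 x y + k2 *: b2 x y)].

Definition commutator (A : lmodType F) (d : A -> A -> A) : A -> A -> A :=
  fun x y => d x y - d y x.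

End Defs.

(** Every identity to be checked is additive in each of its three arguments,
    and the pure tensors span [A ⊗ B], so it suffices to check it on pure
    tensors, where it splits into an identity of [A] tensored with an identity
    of [B].  The associator of [k1 d1 + k2 d2] is a quadratic form in [(k1, k2)]
    whose cross coefficient is the mixed associator of [d1] and [d2]; on pure
    tensors its left symmetry follows from the three mixed axioms of a dual
    pre-Poisson algebra and the two mixed axioms of a pre-Poisson algebra.
    Commutators of pre-Lie products are Lie brackets, which gives the compatible
    Lie structure. *)

From HB Require Import structures.
From mathcomp Require Import all_boot all_order all_algebra.
Import GRing.Theory.
Set Implicit Arguments. Unset Strict Implicit. Unset Printing Implicit Defensive.
Local Open Scope ring_scope.

Lemma eq_subr_swap (V : zmodType) (u v w t : V) : v - t = u - w -> u - v = w - t.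
Proof. by move=> h; rewrite -[u](subrK w) -h addrAC [v - t - v]addrAC subrr add0r addrC. Qed.

Lemma eq_addr_subr (V : zmodType) (u v w t : V) : v + t = u + w -> u - v = t - w.
Proof. by move=> h; rewrite -[u](addrK w) -h addrAC [v + t]addrC addrK. Qed.

Lemma morph_add0 (U V : zmodType) (f : U -> V) : {morph f : x y / x + y} -> f 0 = 0.
Proof. by move=> fD; apply: (@addrI _ (f 0)); rewrite -fD !addr0. Qed.

Definition additive3 (U V : zmodType) (g : U -> U -> U -> V) : Prop :=
  [/\ forall y z, {morph (fun x => g x y z) : x x' / x + x'},
      forall x z, {morph (fun y => g x y z) : y y' / y + y'} &
      forall x y, {morph (fun z => g x y z) : z z' / z + z'}].

Lemma additive3D (U V : zmodType) (g h : U -> U -> U -> V) :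
  additive3 g -> additive3 h -> additive3 (fun x y z => g x y z + h x y z).
Proof.
by case=> gx gy gz [hx hy hz]; split=> ? ? ? ? /=;
  rewrite ?(gx, gy, gz, hx, hy, hz) addrACA.
Qed.

Section Bilinear.
Variables (F : fieldType) (U V W : lmodType F) (f : U -> V -> W).
Hypothesis hf : bilinear_map f.

Lemma bilinDl x x' y : f (x + x') y = f x y + f x' y.
Proof. by have := hf.1 1 x x' y; rewrite !scale1r. Qed.

Lemma bilinDr x y y' : f x (y + y') = f x y + f x y'.
Proof. by have := hf.2 1 x y y'; rewrite !scale1r. Qed.

Lemma bilin0l y : f 0 y = 0.
Proof. exact: (morph_add0 (f := f^~ y) (fun x x' => bilinDl x x' y)). Qed.

Lemma bilin0r x : f x 0 = 0.
Proof. exact: (morph_add0 (bilinDr x)). Qed.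

Lemma bilinZl k x y : f (k *: x) y = k *: f x y.
Proof. by have := hf.1 k x 0 y; rewrite addr0 bilin0l addr0. Qed.

Lemma bilinZr k x y : f x (k *: y) = k *: f x y.
Proof. by have := hf.2 k x y 0; rewrite addr0 bilin0r addr0. Qed.

Lemma bilinNl x y : f (- x) y = - f x y.
Proof. by rewrite -scaleN1r bilinZl scaleN1r. Qed.

Lemma bilinNr x y : f x (- y) = - f x y.
Proof. by rewrite -scaleN1r bilinZr scaleN1r. Qed.

Lemma bilinBl x x' y : f (x - x') y = f x y - f x' y.
Proof. by rewrite bilinDl bilinNl. Qed.

Lemma bilinBr x y y' : f x (y - y') = f x y - f x y'.
Proof. by rewrite bilinDr bilinNr. Qed.

End Bilinear.

Lemma leibniz_skew (V : zmodType) (br : V -> V -> V) :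
  (forall x y z, br x (br y z) = br (br x y) z + br y (br x z)) ->
  forall x y z, br (br y x) z = - br (br x y) z.
Proof.
move=> jacobi x y z; apply/eqP; rewrite -addr_eq0 addrC.
by have := jacobi x y z; rewrite (jacobi y x z) addrA -[LHS]add0r => /addIr <-.
Qed.

Section PreLie.
Variables (F : fieldType) (T : lmodType F).
Implicit Types (d : T -> T -> T) (k : F).

Definition assoc d d' x y z : T := d x (d' y z) - d (d' x y) z.

Lemma additive3_assoc d d' :
  bilinear_map d -> bilinear_map d' -> additive3 (assoc d d').
Proof.
move=> hd hd'; split=> ? ? ? ?; rewrite /assoc;
  by rewrite ?(bilinDl hd, bilinDr hd, bilinDl hd', bilinDr hd') opprD addrACA.
Qed.

Lemma bilinear_lincomb k1 k2 d1 d2 : bilinear_map d1 -> bilinear_map d2 ->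
  bilinear_map (fun x y => k1 *: d1 x y + k2 *: d2 x y).
Proof.
move=> b1 b2; split=> k * /=; rewrite ?(b1.1, b1.2, b2.1, b2.2) !scalerDr !scalerA;
  by rewrite [k * k1]mulrC [k * k2]mulrC addrACA.
Qed.

Lemma assoc_lincomb k1 k2 d1 d2 x y z :
  bilinear_map d1 -> bilinear_map d2 ->
  let d := fun x y => k1 *: d1 x y + k2 *: d2 x y in
  assoc d d x y z = (k1 * k1) *: assoc d1 d1 x y z
    + (k1 * k2) *: (assoc d1 d2 x y z + assoc d2 d1 x y z)
    + (k2 * k2) *: assoc d2 d2 x y z.
Proof.
move=> b1 b2 /=; rewrite /assoc.
rewrite !(bilinDr b1, bilinZr b1, bilinDr b2, bilinZr b2).
rewrite !(bilinDl b1, bilinZl b1, bilinDl b2, bilinZl b2).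
rewrite !scalerDr !scalerA [k2 * k1]mulrC !scalerN !opprD !addrA.
by rewrite [LHS](ACl (1*5*2*6*3*7*4*8)).
Qed.

Lemma compatible_prelie_cross d1 d2 : is_prelie d1 -> is_prelie d2 ->
  (forall x y z, assoc d1 d2 x y z + assoc d2 d1 x y z
                 = assoc d1 d2 y x z + assoc d2 d1 y x z) ->
  compatible_prelie d1 d2.
Proof.
move=> [b1 s1] [b2 s2] s12; split=> // k1 k2.
split=> [|x y z]; first exact: bilinear_lincomb.
pose d := fun x y => k1 *: d1 x y + k2 *: d2 x y.
change (assoc d d x y z = assoc d d y x z).
by rewrite !assoc_lincomb // s12 /assoc s1 s2.
Qed.

Lemma commutator_jacobi d x y z : bilinear_map d ->
  let c := commutator d in
  c x (c y z) + c y (c z x) + c z (c x y)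
  = (assoc d d x y z - assoc d d y x z) + (assoc d d y z x - assoc d d z y x)
    + (assoc d d z x y - assoc d d x z y).
Proof.
move=> hd /=; rewrite /commutator /assoc !(bilinBl hd, bilinBr hd) !opprD !opprK !addrA.
by rewrite [LHS](ACl (1*11*6*12*5*3*10*4*9*7*2*8)).
Qed.

Lemma prelie_commutator_lie d : is_prelie d -> is_lie (commutator d).
Proof.
case=> hd sym; split.
- by split=> k * /=; rewrite /commutator (hd.1, hd.2) (hd.1, hd.2) scalerBr opprD addrACA.
- by move=> x; rewrite /commutator subrr.
- move=> x y z; rewrite commutator_jacobi //.
  by rewrite /assoc (sym x y z) (sym y z x) (sym z x y) !subrr !addr0.
Qed.

Lemma eq_is_lie (b b' : T -> T -> T) :
  (forall x y, b x y = b' x y) -> is_lie b -> is_lie b'.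
Proof.
move=> eqb [[bl br] b0 jacobi]; split; first split.
- by move=> k x x' y; rewrite -!eqb bl.
- by move=> k x y y'; rewrite -!eqb br.
- by move=> x; rewrite -eqb b0.
- by move=> x y z; rewrite -!eqb jacobi.
Qed.

Lemma compatible_prelie_lie d1 d2 :
  compatible_prelie d1 d2 -> compatible_lie (commutator d1) (commutator d2).
Proof.
case=> p1 p2 p12; split; try exact: prelie_commutator_lie.
move=> k1 k2; apply: eq_is_lie (prelie_commutator_lie (p12 k1 k2)) => x y.
by rewrite /commutator !scalerBr opprD addrACA.
Qed.

End PreLie.

Section PureTensors.
Variables (F : fieldType) (A B T : lmodType F) (tens : A -> B -> T).
Hypothesis tens_bilinear : bilinear_map tens.
Hypothesis tens_span :
  forall t : T, exists s : seq (A * B), t = \sum_(p <- s) tens p.1 p.2.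

Lemma eq_on_pure_tensors (V : zmodType) (f g : T -> V) :
  {morph f : t t' / t + t'} -> {morph g : t t' / t + t'} ->
  (forall x a, f (tens x a) = g (tens x a)) -> f =1 g.
Proof.
move=> fD gD eq_fg t; have [s ->] := tens_span t.
rewrite (big_morph f fD (morph_add0 fD)) (big_morph g gD (morph_add0 gD)).
by apply: eq_bigr => p _.
Qed.

Lemma sym12_on_pure_tensors (V : zmodType) (g : T -> T -> T -> V) :
  additive3 g ->
  (forall x a y b z c, g (tens x a) (tens y b) (tens z c)
                       = g (tens y b) (tens x a) (tens z c)) ->
  forall X Y Z, g X Y Z = g Y X Z.
Proof.
case=> gx gy gz sym X Y Z.
have sym2 x a y b Z' : g (tens x a) (tens y b) Z' = g (tens y b) (tens x a) Z'.
  exact: (eq_on_pure_tensors (gz _ _) (gz _ _) (sym x a y b)).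
have sym1 x a Y' Z' : g (tens x a) Y' Z' = g Y' (tens x a) Z'.
  exact: (eq_on_pure_tensors (gy _ Z') (gx _ Z') (fun y b => sym2 x a y b Z')).
exact: (eq_on_pure_tensors (gx Y Z) (gy Y Z) (fun x a => sym1 x a Y Z)).
Qed.

Variables (circ br : A -> A -> A) (dia odot : B -> B -> B) (d1 d2 : T -> T -> T).
Hypotheses (d1_bilinear : bilinear_map d1) (d2_bilinear : bilinear_map d2).
Hypothesis d1_tens : forall x y a b, d1 (tens x a) (tens y b) = tens (circ x y) (dia a b).
Hypothesis d2_tens : forall x y a b, d2 (tens x a) (tens y b) = tens (br x y) (odot a b).

Lemma prelie_tensor_perm :
  (forall x y z, circ x (circ y z) = circ (circ x y) z) ->
  (forall x y z, circ (circ x y) z = circ (circ y x) z) ->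
  is_prelie dia -> is_prelie d1.
Proof.
move=> circA circCl [_ dia_sym]; split=> //.
apply: (sym12_on_pure_tensors (additive3_assoc d1_bilinear d1_bilinear)).
move=> x a y b z c; rewrite /assoc !d1_tens !circA [circ (circ y x) z]circCl.
by rewrite -!(bilinBr tens_bilinear) dia_sym.
Qed.

Lemma prelie_tensor_leibniz :
  (forall x y z, br x (br y z) = br (br x y) z + br y (br x z)) ->
  is_zinbiel odot -> is_prelie d2.
Proof.
move=> jacobi [odot_bilinear zinbiel]; split=> //.
apply: (sym12_on_pure_tensors (additive3_assoc d2_bilinear d2_bilinear)).
move=> x a y b z c; rewrite /assoc !d2_tens (leibniz_skew jacobi x y z) (jacobi x y z) !zinbiel.
rewrite !(bilinDl odot_bilinear) !(bilinNl tens_bilinear) !(bilinDl tens_bilinear).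
rewrite !(bilinDr tens_bilinear) opprK !addrA.
by rewrite [LHS](+%R.[ACl (1*5*4*3*2)]) subrr add0r.
Qed.

Lemma mixed_assoc_tensor_sym :
  (forall x y z, br x (circ y z) = circ (br x y) z + circ y (br x z)) ->
  (forall x y z, br (circ x y) z = circ x (br y z) + circ y (br x z)) ->
  (forall x y z, circ (br x y) z = - circ (br y x) z) ->
  bilinear_map dia -> bilinear_map odot ->
  (forall a b c, odot (dia a b - dia b a) c = dia a (odot b c) - odot b (dia a c)) ->
  (forall a b c, dia (odot a b + odot b a) c = odot a (dia b c) + odot b (dia a c)) ->
  forall X Y Z, assoc d1 d2 X Y Z + assoc d2 d1 X Y Z
                = assoc d1 d2 Y X Z + assoc d2 d1 Y X Z.
Proof.
move=> br_circ_r br_circ_l circ_skew dia_bilinear odot_bilinear dia_comm_odot odot_sym_dia.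
have dia_odot a b c :
    dia a (odot b c) - odot (dia a b) c = odot b (dia a c) - odot (dia b a) c.
  by apply: eq_subr_swap; rewrite -(bilinBl odot_bilinear) dia_comm_odot.
have odot_dia a b c :
    odot a (dia b c) - dia (odot a b) c = - (odot b (dia a c) - dia (odot b a) c).
  by rewrite opprB; apply: eq_addr_subr; rewrite -(bilinDl dia_bilinear) odot_sym_dia.
have regroup P Q R a1 a2 a3 a4 :
    tens P a1 - tens R a3 + (tens (R + Q) a2 - tens (P + Q) a4)
    = tens P (a1 - a4) + tens Q (a2 - a4) + tens R (a2 - a3).
  rewrite !(bilinDl tens_bilinear, bilinBr tens_bilinear) !opprD !addrA.
  by rewrite [LHS](+%R.[ACl (1*5*4*6*3*2)]).
apply: (sym12_on_pure_tensors (additive3D (additive3_assoc d1_bilinear d2_bilinear)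
                                          (additive3_assoc d2_bilinear d1_bilinear))).
move=> x a y b z c; rewrite /assoc !(d1_tens, d2_tens).
rewrite (br_circ_r x) (br_circ_l x) (br_circ_r y) (br_circ_l y) (circ_skew y x z) !regroup.
rewrite (dia_odot a b c) (dia_odot b a c) odot_dia.
rewrite (bilinNl tens_bilinear) (bilinNr tens_bilinear).
by congr (_ - _); rewrite addrC.
Qed.

End PureTensors.

Theorem proposition2p20 (F : fieldType) (charF0 : [pchar F] =i pred0)
  (A B T : lmodType F) (circ br : A -> A -> A) (dia odot : B -> B -> B)
  (tens : A -> B -> T) (d1 d2 : T -> T -> T) :
  dual_pre_poisson circ br ->
  pre_poisson dia odot ->
  is_tensor_product tens ->
  bilinear_map d1 -> bilinear_map d2 ->
  (forall x y a b, d1 (tens x a) (tens y b) = tens (circ x y) (dia a b)) ->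
  (forall x y a b, d2 (tens x a) (tens y b) = tens (br x y) (odot a b)) ->
  [/\ is_prelie d1, is_prelie d2, compatible_prelie d1 d2 &
      compatible_lie (commutator d1) (commutator d2)].
Proof.
move=> [_ [_ [circA [circCl [jacobi [br_circ_r [br_circ_l circ_skew]]]]]]].
move=> [dia_prelie odot_zinbiel dia_comm_odot odot_sym_dia] [tens_bilinear tens_span _].
move=> d1_bilinear d2_bilinear d1_tens d2_tens.
have prelie1 :=
  prelie_tensor_perm tens_bilinear tens_span d1_bilinear d1_tens circA circCl dia_prelie.
have prelie2 :=
  prelie_tensor_leibniz tens_bilinear tens_span d2_bilinear d2_tens jacobi odot_zinbiel.
have cross_sym := mixed_assoc_tensor_sym tens_bilinear tens_span d1_bilinear d2_bilinear
  d1_tens d2_tens br_circ_r br_circ_l circ_skew dia_prelie.1 odot_zinbiel.1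
  dia_comm_odot odot_sym_dia.
have compatible := compatible_prelie_cross prelie1 prelie2 cross_sym.
by split=> //; apply: compatible_prelie_lie.
Qed.
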